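(* Let $G$ be a group acting on the left by isometries on a geodesic semimetric space $X$ which has a basepoint. Suppose that the action is cocompact and that it is outward proper or inward proper. Then $G$ is finitely generated, and $G$, equipped with the word metric with respect to a finite generating set, is quasi-isometric to $X$. In particular, $X$ is a quasi-metric space.
   Context: Let $\mathbb{R}^\infty=\mathbb{R}^{\ge 0}\cup\{\infty\}$ with the usual order extended so that $\infty$ is largest, and $\infty+x=x+\infty=\infty$, $y\infty=\infty y=\infty$ for $y>0$. A semimetric space is a set $X$ with $d:X\times X\to\mathbb{R}^\infty$ such that $d(x,y)=0$ iff $x=y$, and $d(x,z)\le d(x,y)+d(y,z)$ (no symmetry required). A basepoint is $x_0\in X$ with $d(x_0,y)\neq\infty$ for all $y$; $X$ is strongly connected if every point is a basepoint. A path of length $n\ge 0$ from $x$ to $y$ is a map $p:[0,n]\to X$ with $p(0)=x$, $p(n)=y$, $d(p(a),p(b))\le b-a$ for $0\le a\le b\le n$; a geodesic from $x$ to $y$ (when $d(x,y)<\infty$) is a path of length $d(x,y)$; $X$ is geodesic if a geodesic exists between every $x,y$ with $d(x,y)<\infty$. An action by isometries means each $g\in G$ acts by a distance-preserving bijection. For $A,B\subseteq X$, $d(A,B)=\inf_{a\in A,b\in B}d(a,b)$. Out-ball: $\overrightarrow{\mathcal{B}}_r(x_0)=\{y: d(x_0,y)\le r\}$; in-ball: $\overleftarrow{\mathcal{B}}_r(x_0)=\{y: d(y,x_0)\le r\}$; strong ball $\mathcal{B}_r(x_0)=\overrightarrow{\mathcal{B}}_r(x_0)\cap\overleftarrow{\mathcal{B}}_r(x_0)$.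 The action is cocompact if some strong ball $B$ of finite radius has $\{gB:g\in G\}$ covering $X$. It is outward proper if for every out-ball $B$ of finite radius the set $\{g\in G: B\cap gB\neq\varnothing\}$ is finite; inward proper is the same with in-balls. A subset $T\subseteq X$ is $\mu$-quasi-dense if for every $x\in X$ there is $y\in T$ with $\max(d(x,y),d(y,x))\le\mu$. A map $f:X\to X'$ of semimetric spaces is a $(\lambda,\epsilon)$-quasi-isometric embedding ($1\le\lambda<\infty$, $0<\epsilon<\infty$) if $\frac1\lambda d(x,y)-\epsilon\le d'(f(x),f(y))\le\lambda d(x,y)+\epsilon$ for all $x,y$; it is a quasi-isometry if moreover $f(X)$ is $\mu$-quasi-dense for some finite $\mu\ge 0$; spaces are quasi-isometric if such a map exists. A semimetric space is quasi-metric if it is strongly connected and there are $1\le\lambda<\infty$, $0\le\epsilon<\infty$ with $d(y,x)\le\lambda d(x,y)+\epsilon$ for all $x,y$. For a group $G$ and a finite subset $S$ generating $G$ as a monoid, the word metric is $d_S(g,h)=\min\{n: h=gs_1\cdots s_n,\ s_i\in S\}$. *)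

From Stdlib Require Import Reals List.
Open Scope R_scope.

(** Extended nonnegative reals R^infty = R^{>=0} \cup {infty}. *)
Inductive ext : Type := Fin (r : R) | Inf.

Definition ext_le (a b : ext) : Prop :=
  match a, b with
  | Fin x, Fin y => x <= y
  | _, Inf => True
  | Inf, Fin _ => False
  end.

Definition ext_add (a b : ext) : ext :=
  match a, b with
  | Fin x, Fin y => Fin (x + y)
  | _, _ => Inf
  end.

Definition ext_scale (c : R) (a : ext) : ext :=
  match a with
  | Fin x => Fin (c * x)
  | Inf => Inf
  end.

(** Semimetric spaces (no symmetry). *)
Definition semimetric {X : Type} (d : X -> X -> ext) : Prop :=
  (forall x y r, d x y = Fin r -> 0 <= r) /\
  (forall x y, d x y = Fin 0 <-> x = y) /\
  (forall x y z, ext_le (d x z) (ext_add (d x y) (d y z))).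

Definition is_basepoint {X : Type} (d : X -> X -> ext) (x0 : X) : Prop :=
  forall y, d x0 y <> Inf.

Definition has_basepoint {X : Type} (d : X -> X -> ext) : Prop :=
  exists x0, is_basepoint d x0.

Definition strongly_connected {X : Type} (d : X -> X -> ext) : Prop :=
  forall x, is_basepoint d x.

(** A path of length n from x to y: p : [0,n] -> X (values outside [0,n] irrelevant). *)
Definition is_path {X : Type} (d : X -> X -> ext) (n : R) (p : R -> X) (x y : X) : Prop :=
  0 <= n /\ p 0 = x /\ p n = y /\
  (forall a b, 0 <= a -> a <= b -> b <= n -> ext_le (d (p a) (p b)) (Fin (b - a))).

Definition geodesic_space {X : Type} (d : X -> X -> ext) : Prop :=
  forall x y r, d x y = Fin r -> exists p : R -> X, is_path d r p x y.

Definition is_group {G : Type} (mul : G -> G -> G) (one : G) (inv : G -> G) : Prop :=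
  (forall a b c, mul a (mul b c) = mul (mul a b) c) /\
  (forall a, mul one a = a) /\ (forall a, mul a one = a) /\
  (forall a, mul (inv a) a = one) /\ (forall a, mul a (inv a) = one).

Definition is_left_action {G X : Type} (mul : G -> G -> G) (one : G)
  (act : G -> X -> X) : Prop :=
  (forall x, act one x = x) /\ (forall g h x, act (mul g h) x = act g (act h x)).

(* each g acts by a distance-preserving map (bijectivity follows from the action axioms) *)
Definition acts_by_isometries {G X : Type} (d : X -> X -> ext) (act : G -> X -> X) : Prop :=
  forall g x y, d (act g x) (act g y) = d x y.

Definition out_ball {X : Type} (d : X -> X -> ext) (x0 : X) (r : R) (y : X) : Prop :=
  ext_le (d x0 y) (Fin r).
Definition in_ball {X : Type} (d : X -> X -> ext) (x0 : X) (r : R) (y : X) : Prop :=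
  ext_le (d y x0) (Fin r).
Definition strong_ball {X : Type} (d : X -> X -> ext) (x0 : X) (r : R) (y : X) : Prop :=
  out_ball d x0 r y /\ in_ball d x0 r y.

Definition translate {G X : Type} (act : G -> X -> X) (g : G) (B : X -> Prop) (y : X) : Prop :=
  exists z, B z /\ y = act g z.

Definition finite_set {G : Type} (P : G -> Prop) : Prop :=
  exists l : list G, forall g, P g -> In g l.

Definition cocompact {G X : Type} (d : X -> X -> ext) (act : G -> X -> X) : Prop :=
  exists (x0 : X) (r : R), forall x, exists g, translate act g (strong_ball d x0 r) x.

Definition outward_proper {G X : Type} (d : X -> X -> ext) (act : G -> X -> X) : Prop :=
  forall (x0 : X) (r : R),
    finite_set (fun g => exists y, out_ball d x0 r y /\ translate act g (out_ball d x0 r) y).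

Definition inward_proper {G X : Type} (d : X -> X -> ext) (act : G -> X -> X) : Prop :=
  forall (x0 : X) (r : R),
    finite_set (fun g => exists y, in_ball d x0 r y /\ translate act g (in_ball d x0 r) y).

Definition prod_list {G : Type} (mul : G -> G -> G) (one : G) (l : list G) : G :=
  fold_right mul one l.

Definition finitely_generated {G : Type} (mul : G -> G -> G) (one : G) (inv : G -> G) : Prop :=
  exists S : list G, forall g, exists l : list G,
    Forall (fun s => In s S \/ In (inv s) S) l /\ g = prod_list mul one l.

Definition monoid_generates {G : Type} (mul : G -> G -> G) (one : G) (S : list G) : Prop :=
  forall g, exists l : list G, Forall (fun s => In s S) l /\ g = prod_list mul one l.

Definition word_reach {G : Type} (mul : G -> G -> G) (one : G) (S : list G)
  (g h : G) (n : nat) : Prop :=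
  exists l : list G, length l = n /\ Forall (fun s => In s S) l /\
    h = mul g (prod_list mul one l).

Definition is_word_metric {G : Type} (mul : G -> G -> G) (one : G) (S : list G)
  (dS : G -> G -> ext) : Prop :=
  forall g h, exists n : nat,
    dS g h = Fin (INR n) /\ word_reach mul one S g h n /\
    (forall m, word_reach mul one S g h m -> (n <= m)%nat).

Definition qi_embedding {X Y : Type} (d : X -> X -> ext) (d' : Y -> Y -> ext)
  (f : X -> Y) (lam eps : R) : Prop :=
  1 <= lam /\ 0 < eps /\
  forall x y,
    ext_le (ext_scale (/ lam) (d x y)) (ext_add (d' (f x) (f y)) (Fin eps)) /\
    ext_le (d' (f x) (f y)) (ext_add (ext_scale lam (d x y)) (Fin eps)).

Definition quasi_dense {Y : Type} (d' : Y -> Y -> ext) (T : Y -> Prop) (mu : R) : Prop :=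
  forall y, exists t, T t /\ ext_le (d' y t) (Fin mu) /\ ext_le (d' t y) (Fin mu).

Definition quasi_isometry {X Y : Type} (d : X -> X -> ext) (d' : Y -> Y -> ext)
  (f : X -> Y) : Prop :=
  exists lam eps mu, qi_embedding d d' f lam eps /\ 0 <= mu /\
    quasi_dense d' (fun y => exists x, y = f x) mu.

Definition quasi_isometric {X Y : Type} (d : X -> X -> ext) (d' : Y -> Y -> ext) : Prop :=
  exists f : X -> Y, quasi_isometry d d' f.

Definition quasi_metric {X : Type} (d : X -> X -> ext) : Prop :=
  strongly_connected d /\
  exists lam eps, 1 <= lam /\ 0 <= eps /\
    forall x y, ext_le (d y x) (ext_add (ext_scale lam (d x y)) (Fin eps)).

(* Švarc–Milnor argument.  Cocompactness puts every point within distance r, in both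
   directions, of the orbit of a point x0.  Sampling a geodesic from x to y at unit steps
   and moving each sample to a nearby orbit point writes the group element between orbit
   points near x and near y as a word of length at most d(x,y) + 2 in the elements k with
   d(x0, k x0) <= 2r + 1, a finite set by properness.  This gives finite generation and
   the lower quasi-isometry bound; the upper bound is the triangle inequality along a
   word, and applying it backwards along the same word bounds d(y,x) linearly by d(x,y). *)

From Stdlib Require Import Reals List.
From Stdlib Require Import ZArith Lia Lra Psatz.
Import ListNotations.
Open Scope R_scope.

Lemma prod_list_app {G : Type} (mul : G -> G -> G) (one : G)
  (mulA : forall a b c, mul a (mul b c) = mul (mul a b) c)
  (mul1g : forall a, mul one a = a) (w1 w2 : list G) :
  prod_list mul one (w1 ++ w2) = mul (prod_list mul one w1) (prod_list mul one w2).
Proof.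
  induction w1 as [|s w1 IH]; simpl.
  - now rewrite mul1g.
  - rewrite IH. apply mulA.
Qed.

Lemma list_bounded {A : Type} (f : A -> R) (l : list A) :
  exists C, 0 <= C /\ forall k, In k l -> f k <= C.
Proof.
  induction l as [|a l [C [HC HCl]]].
  - exists 0. split; [lra | intros k []].
  - exists (Rmax C (f a)). split.
    + eapply Rle_trans; [exact HC | apply Rmax_l].
    + intros k [<- | Hk]; [apply Rmax_r |].
      eapply Rle_trans; [apply HCl, Hk | apply Rmax_l].
Qed.

Lemma witnesses_length_bounded {A B : Type} (Q : A -> list B -> Prop) (l : list A) :
  (forall k, exists w, Q k w) ->
  exists M, forall k, In k l -> exists w, Q k w /\ (length w <= M)%nat.
Proof.
  intros HQ. induction l as [|a l [M HM]].
  - exists 0%nat. intros k [].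
  - destruct (HQ a) as [w Hw].
    exists (Nat.max M (length w)). intros k [<- | Hk].
    + exists w. split; [exact Hw | lia].
    + destruct (HM k Hk) as [w' [Hw' Hl]]. exists w'. split; [exact Hw' | lia].
Qed.

Lemma word_rewrite_length {G : Type} (mul : G -> G -> G) (one : G)
  (mulA : forall a b c, mul a (mul b c) = mul (mul a b) c)
  (mul1g : forall a, mul one a = a) (F S : list G) (M : nat) :
  (forall k, In k F -> exists w, (Forall (fun s => In s S) w /\ k = prod_list mul one w)
                                 /\ (length w <= M)%nat) ->
  forall l, Forall (fun k => In k F) l -> exists w,
    Forall (fun s => In s S) w /\ (length w <= M * length l)%nat /\
    prod_list mul one w = prod_list mul one l.
Proof.
  intros HM l Hl. induction Hl as [|k l Hk Hl IH].
  - exists nil. simpl. split; [constructor | split; [lia | reflexivity]].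
  - destruct (HM k Hk) as [w1 [[Hw1 Hk1] Hlen1]].
    destruct IH as [w2 [Hw2 [Hlen2 Hp2]]].
    exists (w1 ++ w2). split; [apply Forall_app; split; assumption |]. split.
    + rewrite length_app. simpl. nia.
    + rewrite prod_list_app, Hp2, <- Hk1 by assumption. reflexivity.
Qed.

Lemma nat_ceil (x : R) : 0 <= x -> exists N : nat, x <= INR N <= x + 1.
Proof.
  intros Hx. destruct (archimed x) as [Hup1 Hup2].
  exists (Z.to_nat (up x)).
  rewrite INR_IZR_INZ, Z2Nat.id; [lra |].
  apply le_IZR. lra.
Qed.

(* Some translate of x0 lies near the basepoint, so x0 is a basepoint too; every point u
   then reaches everything through an orbit point g x0 near it. *)
Lemma cocompact_strongly_connected {G X : Type} (mul : G -> G -> G) (one : G)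
  (inv : G -> G) (d : X -> X -> ext) (act : G -> X -> X) :
  is_group mul one inv -> semimetric d -> has_basepoint d ->
  is_left_action mul one act -> acts_by_isometries d act -> cocompact d act ->
  strongly_connected d.
Proof.
  intros (_ & _ & _ & _ & mulgV) (_ & _ & Htri) [b Hb] [act1 actM] Hisom [x0 [r Hcov]].
  assert (act_inv : forall g u, act g (act (inv g) u) = u).
  { intros g u. now rewrite <- actM, mulgV, act1. }
  assert (Hx0 : forall w, d x0 w <> Inf).
  { intro w. destruct (Hcov b) as [k [z [[Hz _] Hbz]]].
    assert (Hzw : d z w <> Inf) by (rewrite <- (Hisom k), <- Hbz; apply Hb).
    specialize (Htri x0 z w). unfold out_ball in Hz.
    destruct (d x0 z); [| contradiction].
    destruct (d z w); [| congruence].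
    destruct (d x0 w); simpl in Htri; [discriminate | contradiction]. }
  intros u v. destruct (Hcov u) as [g [z [[_ Hz] Huz]]].
  specialize (Htri u (act g x0) v).
  assert (H1 : d u (act g x0) = d z x0) by (rewrite Huz; apply Hisom).
  assert (H2 : d (act g x0) v = d x0 (act (inv g) v))
    by (now rewrite <- (Hisom g x0 (act (inv g) v)), act_inv).
  rewrite H1, H2 in Htri. unfold in_ball in Hz.
  pose proof (Hx0 (act (inv g) v)) as H3.
  destruct (d z x0); [| contradiction].
  destruct (d x0 (act (inv g) v)); [| congruence].
  destruct (d u v); simpl in Htri; [discriminate | contradiction].
Qed.

Lemma finite_semimetric_real {X : Type} (d : X -> X -> ext) :
  semimetric d -> strongly_connected d ->
  exists D : X -> X -> R, (forall u v, d u v = Fin (D u v)) /\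
    (forall u, D u u = 0) /\ (forall u v, 0 <= D u v) /\
    (forall u v w, D u w <= D u v + D v w).
Proof.
  intros (Hpos & Hzero & Htri) Hfin.
  pose (D u v := match d u v with Fin a => a | Inf => 0 end).
  assert (HdD : forall u v, d u v = Fin (D u v)).
  { intros u v. unfold D. destruct (d u v) eqn:E; [reflexivity |].
    exfalso. exact (Hfin u v E). }
  clearbody D. exists D. repeat split.
  - exact HdD.
  - intro u. pose proof (proj2 (Hzero u u) eq_refl) as H. rewrite HdD in H. now injection H.
  - intros u v. exact (Hpos u v _ (HdD u v)).
  - intros u v w. specialize (Htri u v w). now rewrite !HdD in Htri.
Qed.

Lemma isometries_real {G X : Type} (d : X -> X -> ext) (D : X -> X -> R)
  (act : G -> X -> X) :
  (forall u v, d u v = Fin (D u v)) -> acts_by_isometries d act ->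
  forall g u v, D (act g u) (act g v) = D u v.
Proof.
  intros HdD Hisom g u v. specialize (Hisom g u v). rewrite !HdD in Hisom.
  now injection Hisom.
Qed.

Lemma geodesic_real {X : Type} (d : X -> X -> ext) (D : X -> X -> R) :
  (forall u v, d u v = Fin (D u v)) -> geodesic_space d ->
  forall x y, exists p : R -> X, p 0 = x /\ p (D x y) = y /\
    forall a b, 0 <= a -> a <= b -> b <= D x y -> D (p a) (p b) <= b - a.
Proof.
  intros HdD Hgeo x y. destruct (Hgeo x y (D x y) (HdD x y)) as [p (_ & Hp0 & HpL & Hp)].
  exists p. repeat split; [exact Hp0 | exact HpL |].
  intros a b Ha Hab Hb. specialize (Hp a b Ha Hab Hb). now rewrite HdD in Hp.
Qed.

Lemma cocompact_real {G X : Type} (d : X -> X -> ext) (D : X -> X -> R)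
  (act : G -> X -> X) :
  (forall u v, d u v = Fin (D u v)) -> acts_by_isometries d act -> cocompact d act ->
  exists x0 r, forall u, exists k, D (act k x0) u <= r /\ D u (act k x0) <= r.
Proof.
  intros HdD Hisom [x0 [r Hcov]]. exists x0, r. intro u.
  destruct (Hcov u) as [k [z [[Hz1 Hz2] ->]]]. exists k.
  unfold out_ball, in_ball in *. rewrite HdD in Hz1, Hz2.
  rewrite !(isometries_real d D act HdD Hisom). now split.
Qed.

Section OrbitMap.

Variables (G X : Type) (mul : G -> G -> G) (one : G) (inv : G -> G)
  (act : G -> X -> X) (D : X -> X -> R) (x0 : X) (r : R).

Hypothesis HG : is_group mul one inv.
Hypothesis Hact : is_left_action mul one act.
Hypothesis D_refl : forall u, D u u = 0.
Hypothesis D_ge0 : forall u v, 0 <= D u v.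
Hypothesis D_triangle : forall u v w, D u w <= D u v + D v w.
Hypothesis D_act : forall g u v, D (act g u) (act g v) = D u v.
Hypothesis D_geodesic : forall x y, exists p : R -> X, p 0 = x /\ p (D x y) = y /\
  forall a b, 0 <= a -> a <= b -> b <= D x y -> D (p a) (p b) <= b - a.
Hypothesis orbit_dense : forall u, exists k, D (act k x0) u <= r /\ D u (act k x0) <= r.

Local Notation prod := (prod_list mul one).

Definition short (k : G) : Prop := D x0 (act k x0) <= 2 * r + 1.

Lemma act_mul g k u : act g (act k u) = act (mul g k) u.
Proof. destruct Hact as [_ actM]. now rewrite actM. Qed.

Lemma mulKg g a : mul g (mul (inv g) a) = a.
Proof. destruct HG as (mulA & mul1g & _ & _ & mulgV). now rewrite mulA, mulgV, mul1g. Qed.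

Lemma act_inv_r g u : act g (act (inv g) u) = u.
Proof.
  destruct HG as (_ & _ & _ & _ & mulgV). destruct Hact as [act1 _].
  now rewrite act_mul, mulgV, act1.
Qed.

Lemma radius_ge0 : 0 <= r.
Proof.
  destruct (orbit_dense x0) as [k [Hk _]]. pose proof (D_ge0 (act k x0) x0). lra.
Qed.

(* Each unit step of the chain is shadowed by a jump of length at most r + 1 + r
   between nearby orbit points. *)
Lemma chain_short_word N (q : nat -> X) g h :
  D (act g x0) (q 0%nat) <= r -> D (q N) (act h x0) <= r ->
  (forall i, (i < N)%nat -> D (q i) (q (S i)) <= 1) ->
  exists l, (length l <= S N)%nat /\ Forall short l /\ h = mul g (prod l).
Proof.
  revert q g. induction N as [|N IHN]; intros q g H0 HN Hstep.
  - exists [mul (inv g) h]. split; [simpl; lia |]. split.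
    + constructor; [| constructor]. unfold short.
      rewrite <- (D_act g), act_mul, mulKg.
      pose proof (D_triangle (act g x0) (q 0%nat) (act h x0)). lra.
    + simpl. destruct HG as (_ & _ & mulg1 & _). now rewrite mulg1, mulKg.
  - destruct (orbit_dense (q 1%nat)) as [g1 [H1a H1b]].
    destruct (IHN (fun i => q (S i)) g1 H1a HN (fun i Hi => Hstep (S i) ltac:(lia)))
      as [l [Hlen [Hall Heq]]].
    exists (mul (inv g) g1 :: l). split; [simpl; lia |]. split.
    + constructor; [| exact Hall]. unfold short.
      rewrite <- (D_act g), act_mul, mulKg.
      pose proof (D_triangle (act g x0) (q 0%nat) (act g1 x0)).
      pose proof (D_triangle (q 0%nat) (q 1%nat) (act g1 x0)).
      pose proof (Hstep 0%nat ltac:(lia)). lra.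
    + simpl. rewrite Heq. destruct HG as (mulA & _). now rewrite <- mulA, mulKg.
Qed.

Lemma geodesic_short_word x y g h :
  D (act g x0) x <= r -> D y (act h x0) <= r ->
  exists l, INR (length l) <= D x y + 2 /\ Forall short l /\ h = mul g (prod l).
Proof.
  intros Hx Hy.
  destruct (D_geodesic x y) as [p [Hp0 [HpL Hp]]].
  destruct (nat_ceil (D x y) (D_ge0 x y)) as [N HN].
  destruct (chain_short_word N (fun i => p (Rmin (INR i) (D x y))) g h)
    as [l [Hlen [Hl Heq]]].
  - simpl. rewrite Rmin_left, Hp0 by apply D_ge0. exact Hx.
  - rewrite Rmin_right, HpL by lra. exact Hy.
  - intros i _. cbv beta. pose proof (pos_INR i). pose proof (D_ge0 x y). rewrite S_INR.
    specialize (Hp (Rmin (INR i) (D x y)) (Rmin (INR i + 1) (D x y))).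
    unfold Rmin in *. destruct (Rle_dec (INR i) (D x y));
      destruct (Rle_dec (INR i + 1) (D x y)); lra.
  - exists l. split; [| split; assumption].
    apply le_INR in Hlen. rewrite S_INR in Hlen. lra.
Qed.

Lemma orbit_displacement_le C (P : G -> Prop) l :
  (forall k, P k -> D x0 (act k x0) <= C) -> Forall P l ->
  D x0 (act (prod l) x0) <= INR (length l) * C.
Proof.
  intros HP Hl. induction Hl as [|k l Hk Hl IH].
  - destruct Hact as [act1 _]. simpl. rewrite act1, D_refl. lra.
  - change (prod (k :: l)) with (mul k (prod l)). change (length (k :: l)) with (S (length l)).
    rewrite <- act_mul, S_INR.
    pose proof (D_triangle x0 (act k x0) (act k (act (prod l) x0))).
    rewrite D_act in H. pose proof (HP k Hk). lra.
Qed.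

Lemma orbit_return_le C (P : G -> Prop) l :
  (forall k, P k -> D (act k x0) x0 <= C) -> Forall P l ->
  D (act (prod l) x0) x0 <= INR (length l) * C.
Proof.
  intros HP Hl. induction Hl as [|k l Hk Hl IH].
  - destruct Hact as [act1 _]. simpl. rewrite act1, D_refl. lra.
  - change (prod (k :: l)) with (mul k (prod l)). change (length (k :: l)) with (S (length l)).
    rewrite <- act_mul, S_INR.
    pose proof (D_triangle (act k (act (prod l) x0)) (act k x0) x0).
    rewrite D_act in H. pose proof (HP k Hk). lra.
Qed.

Lemma short_elements_finite (d : X -> X -> ext) :
  (forall u v, d u v = Fin (D u v)) -> outward_proper d act \/ inward_proper d act ->
  exists F, forall k, short k -> In k F.
Proof.
  intros HdD [Hout | Hin].
  - destruct (Hout x0 (2 * r + 1)) as [F HF]. exists F. intros k Hk. apply HF.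
    exists (act k x0). unfold out_ball. rewrite !HdD. split; [exact Hk |].
    exists x0. rewrite HdD, D_refl. split; [simpl; pose proof radius_ge0; lra | reflexivity].
  - destruct (Hin x0 (2 * r + 1)) as [F HF]. exists F. intros k Hk. apply HF.
    exists x0. unfold in_ball. rewrite HdD, D_refl. split; [simpl; pose proof radius_ge0; lra |].
    exists (act (inv k) x0). split; [| now rewrite act_inv_r].
    unfold in_ball. rewrite HdD, <- (D_act k), act_inv_r. exact Hk.
Qed.

Variable F : list G.
Hypothesis short_in : forall k, short k -> In k F.

Lemma orbit_finitely_generated : finitely_generated mul one inv.
Proof.
  destruct Hact as [act1 _].
  exists F. intro g.
  destruct (geodesic_short_word x0 (act g x0) one g) as [l [_ [Hl Heq]]].
  - rewrite act1, D_refl. exact radius_ge0.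
  - rewrite D_refl. exact radius_ge0.
  - exists l. split.
    + eapply Forall_impl; [| exact Hl]. intros k Hk. left. now apply short_in.
    + destruct HG as (_ & mul1g & _). now rewrite mul1g in Heq.
Qed.

Lemma word_length_le_orbit_dist (S : list G) :
  monoid_generates mul one S ->
  exists M, 0 <= M /\ forall g h, exists w, Forall (fun s => In s S) w /\
    h = mul g (prod w) /\ INR (length w) <= M * (D (act g x0) (act h x0) + 2).
Proof.
  intros HS. destruct HG as (mulA & mul1g & _).
  destruct (witnesses_length_bounded
              (fun k w => Forall (fun s => In s S) w /\ k = prod w) F HS) as [M HM].
  exists (INR M). split; [apply pos_INR |]. intros g h.
  destruct (geodesic_short_word (act g x0) (act h x0) g h) as [l [Hlen [Hl Heq]]];
    [rewrite D_refl; exact radius_ge0 .. |].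
  destruct (word_rewrite_length mul one mulA mul1g F S M HM l) as [w [Hw [Hwlen Hwp]]].
  { eapply Forall_impl; [| exact Hl]. exact short_in. }
  exists w. split; [exact Hw | split; [now rewrite Hwp |]].
  apply le_INR in Hwlen. rewrite mult_INR in Hwlen.
  pose proof (pos_INR M). nra.
Qed.

Lemma orbit_dist_le_word_length (S : list G) :
  exists C, 0 <= C /\ forall g w, Forall (fun s => In s S) w ->
    D (act g x0) (act (mul g (prod w)) x0) <= INR (length w) * C.
Proof.
  destruct (list_bounded (fun s => D x0 (act s x0)) S) as [C [HC HCS]].
  exists C. split; [exact HC |]. intros g w Hw.
  rewrite <- act_mul, D_act. exact (orbit_displacement_le C _ w HCS Hw).
Qed.

Lemma orbit_dist_reverse_le :
  exists lam eps, 1 <= lam /\ 0 <= eps /\ forall x y, D y x <= lam * D x y + eps.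
Proof.
  destruct (list_bounded (fun k => D (act k x0) x0) F) as [C [HC HCF]].
  exists (C + 1), (2 * r + 2 * C). split; [lra | split; [pose proof radius_ge0; lra |]].
  intros x y.
  destruct (orbit_dense x) as [g [Hg1 Hg2]]. destruct (orbit_dense y) as [h [Hh1 Hh2]].
  destruct (geodesic_short_word x y g h Hg1 Hh2) as [l [Hlen [Hl Heq]]].
  assert (Hback : D (act h x0) (act g x0) <= INR (length l) * C).
  { rewrite Heq, <- act_mul, D_act. apply (orbit_return_le C (fun k => In k F)); [exact HCF |].
    eapply Forall_impl; [| exact Hl]. exact short_in. }
  pose proof (D_triangle y (act h x0) x). pose proof (D_triangle (act h x0) (act g x0) x).
  pose proof (D_ge0 x y). pose proof (pos_INR (length l)). nra.
Qed.

Lemma orbit_map_quasi_isometry (d : X -> X -> ext) (S : list G) (dS : G -> G -> ext) :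
  (forall u v, d u v = Fin (D u v)) -> monoid_generates mul one S ->
  is_word_metric mul one S dS -> quasi_isometry dS d (fun g => act g x0).
Proof.
  intros HdD HS HdS.
  destruct (word_length_le_orbit_dist S HS) as [M [HM Hword]].
  destruct (orbit_dist_le_word_length S) as [C [HC Horbit]].
  set (lam := M + C + 1).
  exists lam, 2, r. split; [split; [unfold lam; lra | split; [lra |]] |].
  - intros g h. destruct (HdS g h) as [n [Hn [Hreach Hmin]]].
    rewrite Hn, !HdD. simpl. split.
    + destruct (Hword g h) as [w [Hw [Heq Hlen]]].
      assert (Hnw : (n <= length w)%nat) by (apply Hmin; now exists w).
      apply le_INR in Hnw. pose proof (D_ge0 (act g x0) (act h x0)).
      apply (Rmult_le_reg_l lam); [unfold lam; lra |].
      rewrite <- Rmult_assoc, Rinv_r, Rmult_1_l by (unfold lam; lra).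
      unfold lam. nra.
    + destruct Hreach as [w [Hlen [Hw ->]]].
      pose proof (Horbit g w Hw) as Hd. rewrite Hlen in Hd.
      pose proof (pos_INR n). unfold lam. nra.
  - split; [exact radius_ge0 |]. intro y. destruct (orbit_dense y) as [k [Hk1 Hk2]].
    exists (act k x0). split; [now exists k |]. rewrite !HdD. now split.
Qed.

End OrbitMap.

Theorem theorem3p5
  (G X : Type) (mul : G -> G -> G) (one : G) (inv : G -> G)
  (d : X -> X -> ext) (act : G -> X -> X)
  (HG : is_group mul one inv)
  (Hd : semimetric d) (Hgeo : geodesic_space d) (Hbase : has_basepoint d)
  (Hact : is_left_action mul one act) (Hisom : acts_by_isometries d act)
  (Hcoc : cocompact d act)
  (Hprop : outward_proper d act \/ inward_proper d act) :
  finitely_generated mul one inv /\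
  (forall (S : list G) (dS : G -> G -> ext),
     monoid_generates mul one S -> is_word_metric mul one S dS ->
     quasi_isometric dS d) /\
  quasi_metric d.
Proof.
  pose proof (cocompact_strongly_connected mul one inv d act HG Hd Hbase Hact Hisom Hcoc)
    as Hconn.
  destruct (finite_semimetric_real d Hd Hconn) as (D & HdD & D_refl & D_ge0 & D_triangle).
  pose proof (isometries_real d D act HdD Hisom) as D_act.
  pose proof (geodesic_real d D HdD Hgeo) as D_geodesic.
  destruct (cocompact_real d D act HdD Hisom Hcoc) as (x0 & r & Hdense).
  destruct (short_elements_finite G X mul one inv act D x0 r HG Hact D_refl D_ge0 D_act
              Hdense d HdD Hprop) as [F HF].
  split; [| split].
  - eapply orbit_finitely_generated; eauto.
  - intros S dS HS HdS. exists (fun g => act g x0).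
    eapply orbit_map_quasi_isometry; eauto.
  - split; [exact Hconn |].
    destruct (orbit_dist_reverse_le G X mul one inv act D x0 r HG Hact D_refl D_ge0
                D_triangle D_act D_geodesic Hdense F HF) as (lam & eps & Hlam & Heps & Hrev).
    exists lam, eps. repeat split; [exact Hlam | exact Heps |].
    intros x y. rewrite !HdD. exact (Hrev x y).
Qed.
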